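(* Let $\Omega\subset\mathbb{R}^n$ ($n\ge2$) be a bounded domain with Lipschitz boundary, $\gamma,\beta,\theta\in M_0(\Omega)$ with $\theta(x)\ge\gamma(x)+\beta(x)+\varepsilon_0$ a.e. for some $\varepsilon_0>0$, and let $p\in M_0(\Omega)$ with $p(x)\ge\theta(x)$ for a.e. $x\in\Omega$. Then $W^{1,p(x)}(\Omega)\subset S_{1,\gamma(x),\beta(x),\theta(x)}(\Omega)$.
   Context: $M_0(\Omega)$: measurable $p:\Omega\to[1,\infty]$ with $1\le p^-\le p(x)\le p^+<\infty$ a.e. $W^{1,p(x)}(\Omega)=\{u\in L^{p(x)}(\Omega):|\nabla u|\in L^{p(x)}(\Omega)\}$ (variable exponent Sobolev space). $D_i=\partial/\partial x_i$. $S_{1,\gamma(x),\beta(x),\theta(x)}(\Omega)=\{u\in L^1(\Omega):\int_\Omega|u|^{\theta(x)}dx+\sum_{i=1}^n\int_\Omega|u|^{\gamma(x)}|D_iu|^{\beta(x)}dx<\infty\}$. *)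

From HB Require Import structures.
From mathcomp Require Import all_boot all_order all_algebra.
From mathcomp Require Import all_classical all_reals all_analysis.
Set Implicit Arguments. Unset Strict Implicit. Unset Printing Implicit Defensive.
Import Order.TTheory GRing.Theory Num.Theory.
Import numFieldNormedType.Exports.
Local Open Scope classical_set_scope.
Local Open Scope ring_scope.

(* measurable structure on R^n = 'rV[R]_n : product sigma-algebra generated by
   the coordinate maps into (Lebesgue-measurable sets of) R *)
Section measurable_rV.
Context (R : realType) (n : nat).
Let coors : 'I_n -> 'rV[R]_n -> measurableTypeR R := fun i x => x ord0 i.
Let rV_set0 : g_sigma_preimage coors set0.
Proof. exact: sigma_algebra0. Qed.
Let rV_setC A : g_sigma_preimage coors A -> g_sigma_preimage coors (~` A).
Proof. exact: sigma_algebraC. Qed.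
Let rV_bigcup (F : _^nat) : (forall i, g_sigma_preimage coors (F i)) ->
  g_sigma_preimage coors (\bigcup_i (F i)).
Proof. exact: sigma_algebra_bigcup. Qed.
HB.instance Definition _ := @isMeasurable.Build
  (measure_tuple_display default_measure_display)
  'rV[R]_n (g_sigma_preimage coors) rV_set0 rV_setC rV_bigcup.
End measurable_rV.

(* n-dimensional Lebesgue measure, as the iterated product measure
   lambda_1 x lambda_{n} transported to 'rV_(1+n) along row_mx *)
Fixpoint lebn (R : realType) (n : nat) : set 'rV[R]_n -> \bar R :=
  match n with
  | 0 => \d_(0 : 'rV[R]_0)
  | m.+1 => pushforward (product_measure1 (@lebesgue_measure R) (@lebn R m))
              (fun p : measurableTypeR R * 'rV[R]_m =>
                 (row_mx (\row_(j < 1) p.1) p.2 : 'rV[R]_m.+1))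
  end.

Section sobolev_defs.
Context (R : realType) (n : nat).
Local Notation V := 'rV[R]_n.
Local Notation mu := (@lebn R n).

Definition bounded_domain (Om : set V) : Prop :=
  [/\ Om !=set0, open Om, connected Om & bounded_set Om].

(* Lipschitz boundary (Grisvard, Def. 1.2.1.1): near every boundary point, after
   an orthogonal change of coordinates y |-> x0 + y *m Q, the domain is the
   region strictly above the graph y_i = a(y') of a Lipschitz function a of the
   remaining coordinates y', inside a cylinder |y_j| < r (j <> i), |y_i| < h. *)
Definition lipschitz_boundary (Om : set V) : Prop :=
  forall x0 : V, (closure Om `\` Om) x0 ->
  exists (Q : 'M[R]_n) (i : 'I_n) (a : V -> R) (L r h : R),
  [/\ Q *m Q^T = 1%:M, 0 < r, 0 < h &
      (forall y z : V, `|a y - a z| <= L * `|y - z|)] /\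
  [/\
      (forall y z : V, (forall j, j != i -> y ord0 j = z ord0 j) -> a y = a z),
      (forall y : V, (forall j, j != i -> `|y ord0 j| < r) -> `|a y| < h / 2) &
      (forall y : V, (forall j, j != i -> `|y ord0 j| < r) -> `|y ord0 i| < h ->
         (Om (x0 + y *m Q) <-> a y < y ord0 i))].

Definition partial (i : 'I_n) (f : V -> R) : V -> R :=
  fun x => derive f x (delta_mx 0 i : V).

Definition iter_partial (s : seq 'I_n) (f : V -> R) : V -> R :=
  foldr partial f s.

Definition test_function (Om : set V) (phi : V -> R) : Prop :=
  (forall (s : seq 'I_n) (x : V), differentiable (iter_partial s phi) x) /\
  compact (closure [set x | phi x != 0]) /\ closure [set x | phi x != 0] `<=` Om.

Definition weak_gradient (Om : set V) (u : V -> R) (g : 'I_n -> V -> R) : Prop :=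
  (forall i, measurable_fun Om (g i)) /\
  (forall K : set V, compact K -> K `<=` Om ->
     mu.-integrable K (EFin \o u) /\ forall i, mu.-integrable K (EFin \o g i)) /\
  forall (i : 'I_n) (phi : V -> R), test_function Om phi ->
    (\int[mu]_(x in Om) (u x * partial i phi x)%:E =
     - \int[mu]_(x in Om) (g i x * phi x)%:E)%E.

Definition M0 (Om : set V) (p : V -> R) : Prop :=
  measurable_fun Om p /\
  exists pp : R, {ae mu, forall x, Om x -> 1 <= p x <= pp}.

Definition Lpx (Om : set V) (p : V -> R) (u : V -> R) : Prop :=
  measurable_fun Om u /\
  exists lam : R, 0 < lam /\
    (\int[mu]_(x in Om) ((`|u x| / lam) `^ p x)%:E < +oo)%E.

Definition W1px (Om : set V) (p : V -> R) : set (V -> R) :=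
  fun u => Lpx Om p u /\
    exists g : 'I_n -> V -> R, weak_gradient Om u g /\
      Lpx Om p (fun x => Num.sqrt (\sum_i (g i x) ^+ 2)).

Definition S1 (Om : set V) (gam bet the : V -> R) : set (V -> R) :=
  fun u => mu.-integrable Om (EFin \o u) /\
    exists g : 'I_n -> V -> R, weak_gradient Om u g /\
      (\int[mu]_(x in Om) (`|u x| `^ the x)%:E < +oo)%E /\
      forall i : 'I_n,
        (\int[mu]_(x in Om) (`|u x| `^ gam x * `|g i x| `^ bet x)%:E < +oo)%E.

End sobolev_defs.

(* Once Omega has finite measure the embedding is elementary.  For
   0 <= s(x) <= p(x) <= p^+ and lam > 0 one has
   a^s <= max(1, lam)^(p^+) (1 + (a / lam)^p), so a finite modular
   int (|u| / lam)^p(x) makes |u|^s(x) integrable; take s = 1 and s = theta.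
   For the mixed terms,
   |u|^gamma |D_i u|^beta <= |u|^(gamma + beta) + |D_i u|^(gamma + beta),
   where gamma + beta <= theta <= p and |D_i u| <= |grad u|.  What is needed
   of lebn is that it is a sigma-finite measure, finite on bounded sets, for
   which open sets are measurable (as countable unions of rational boxes). *)

From HB Require Import structures.
From mathcomp Require Import all_boot all_order all_algebra.
From mathcomp Require Import all_classical all_reals all_analysis.
From mathcomp Require Import lra measurable_realfun.
Import Order.TTheory GRing.Theory Num.Theory.
Import numFieldNormedType.Exports.
Local Open Scope classical_set_scope.
Local Open Scope ring_scope.

Section row_measurable.
Context {R : realType}.

Lemma measurable_coord {n} (i : 'I_n) :
  measurable_fun [set: 'rV[R]_n] (fun x : 'rV[R]_n => x ord0 i).
Proof.
move=> _ Y mY; rewrite setTI; apply: sub_sigma_algebra.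
rewrite -bigcup_seq; exists i; first by rewrite /= mem_index_enum.
by exists Y => //; rewrite setTI.
Qed.

Lemma measurable_fun_rowP {d} {T : measurableType d} {n} (f : T -> 'rV[R]_n) :
  (forall i, measurable_fun [set: T] (fun x => f x ord0 i)) ->
  measurable_fun [set: T] f.
Proof.
move=> mf _ Y mY; rewrite setTI.
have gen_sub : g_sigma_preimage
    (fun i => (fun x : 'rV[R]_n => x ord0 i : measurableTypeR R) \o f)
  `<=` measurable.
  apply: smallest_sub; first exact: sigma_algebra_measurable.
  case: n => [|n] in f mf Y mY *; first by rewrite big_ord0.
  rewrite -bigcup_mkord_ord; apply: bigcup_sub => i _ A [B mB <-].
  exact: mf.
by apply: gen_sub; rewrite g_sigma_preimage_comp; exists Y => //; rewrite setTI.
Qed.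

Lemma measurable_coord_box {n} (I : 'I_n -> set R) :
  (forall i, measurable (I i)) ->
  measurable [set x : 'rV[R]_n | forall i, I i (x ord0 i)].
Proof.
move=> mI.
rewrite (_ : [set x | _] =
    \bigcap_(i in [set: 'I_n]) ((fun x : 'rV[R]_n => x ord0 i) @^-1` I i)).
  apply: fin_bigcap_measurable; first exact: finite_finset.
  by move=> i _; rewrite -[X in measurable X]setTI; exact: measurable_coord.
by apply/seteqP; split => x /= xI i; [move=> _|]; apply: xI.
Qed.

Definition row_cons {m} (p : measurableTypeR R * 'rV[R]_m) : 'rV[R]_m.+1 :=
  row_mx (\row_(j < 1) p.1) p.2.

Lemma row_cons_coord {m} (p : measurableTypeR R * 'rV[R]_m) (i : 'I_m.+1) :
  row_cons p ord0 i = if fintype.split (i : 'I_(1 + m)) is inr k then p.2 ord0 k else p.1.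
Proof.
rewrite /row_cons; have := @splitK 1 m i.
case: (fintype.split (i : 'I_(1 + m))) => [j|k] <- /=.
  by rewrite (row_mxEl (\row_(j < 1) p.1)) mxE.
by rewrite (row_mxEr (\row_(j < 1) p.1)).
Qed.

Lemma measurable_row_cons m : measurable_fun setT (@row_cons m).
Proof.
apply: measurable_fun_rowP => i.
under eq_fun do rewrite row_cons_coord.
case: fintype.split => [_|k]; first exact: measurable_fst.
exact: measurableT_comp (measurable_coord k) measurable_snd.
Qed.

Definition cube n (M : R) : set 'rV[R]_n :=
  [set x | forall i, `[-M, M]%classic (x ord0 i)].

Lemma measurable_cube {n} M : measurable (cube n M).
Proof.
by apply: (@measurable_coord_box n (fun=> `[-M, M]%classic)) => i; exact: measurable_itv.
Qed.

Lemma row_cons_preimage_cube m M :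
  @row_cons m @^-1` cube m.+1 M = `[-M, M]%classic `*` cube m M.
Proof.
apply/seteqP; split => [[a v] /= av|[a v] [/= aM vM] i /=].
  split; first by have := av (@lshift 1 m ord0); rewrite row_cons_coord (unsplitK (inl _ _)).
  by move=> k; have := av (rshift 1 k); rewrite row_cons_coord (unsplitK (inr _ _)).
by rewrite row_cons_coord; case: fintype.split.
Qed.

Lemma coord_le_norm {n} (x : 'rV[R]_n) i : `|x ord0 i| <= `|x|.
Proof.
change (`|x ord0 i| <= mx_norm x); rewrite mx_normrE.
exact: le_trans _ (le_bigmax _ _ (ord0, i)).
Qed.

Lemma bigcup_cube n : [set: 'rV[R]_n] = \bigcup_(k : nat) cube n k%:R.
Proof.
apply/seteqP; split => x // _; exists (Num.truncn `|x|).+1 => // i.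
rewrite /= in_itv /= -ler_norml.
exact: le_trans (coord_le_norm x i) (ltW (truncnS_gt _)).
Qed.

Lemma bounded_set_sub_cube {n} {A : set 'rV[R]_n} :
  bounded_set A -> exists M, A `<=` cube n M.
Proof.
case=> M [_ AM]; exists (M + 1) => x Ax i.
rewrite /= in_itv /= -ler_norml.
by apply: le_trans (coord_le_norm x i) _; apply: AM; rewrite ?ltrDl.
Qed.

End row_measurable.

Section row_cons_measure.
Local Open Scope ereal_scope.
Context {R : realType} {m : nat} {mu : {sigma_finite_measure set 'rV[R]_m -> \bar R}}.

Definition row_cons_measure (mu_cube : forall M, mu (cube m M) < +oo) :
    set 'rV[R]_m.+1 -> \bar R :=
  pushforward (@lebesgue_measure R \x mu) (@row_cons R m).

Variable mu_cube : forall M, mu (cube m M) < +oo.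

Let mrow_cons := @measurable_row_cons R m.

Let row_cons_measure0 : row_cons_measure mu_cube set0 = 0.
Proof. by apply: measure0; exact: mrow_cons. Qed.

Let row_cons_measure_ge0 A : 0 <= row_cons_measure mu_cube A.
Proof. by apply: measure_ge0; exact: mrow_cons. Qed.

Let row_cons_measure_sigma_additive : semi_sigma_additive (row_cons_measure mu_cube).
Proof. by apply: measure_semi_sigma_additive; exact: mrow_cons. Qed.

HB.instance Definition _ := isMeasure.Build _ _ _ (row_cons_measure mu_cube)
  row_cons_measure0 row_cons_measure_ge0 row_cons_measure_sigma_additive.

Lemma row_cons_measure_cube M : row_cons_measure mu_cube (cube m.+1 M) < +oo.
Proof.
rewrite /row_cons_measure /pushforward row_cons_preimage_cube.
rewrite product_measure1E //; last exact: measurable_cube.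
have itv_lty : lebesgue_measure (`[- M, M]%classic%R : set R) < +oo.
  by rewrite lebesgue_measure_itv; case: ifP => // _; exact: ltry.
apply: lte_mul_pinfty; [exact: measure_ge0| |exact: mu_cube].
by rewrite ge0_fin_numE // measure_ge0.
Qed.

Let row_cons_measure_sigma_finite : sigma_finite setT (row_cons_measure mu_cube).
Proof.
exists (fun k => cube m.+1 k%:R); first exact: bigcup_cube.
by move=> k; split; [exact: measurable_cube|exact: row_cons_measure_cube].
Qed.

HB.instance Definition _ := @Measure_isSigmaFinite.Build _ _ _
  (row_cons_measure mu_cube) row_cons_measure_sigma_finite.

End row_cons_measure.

Lemma lebn_sigma_finite_cube (R : realType) n :
  exists mu : {sigma_finite_measure set 'rV[R]_n -> \bar R},
    (mu : set _ -> \bar R) = @lebn R n /\ forall M, (mu (cube n M) < +oo)%E.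
Proof.
elim: n => [|m [mu [mu_lebn mu_cube]]].
  by exists (@dirac _ _ (0 : 'rV[R]_0) R); split => // M; exact: ltry.
exists (row_cons_measure mu_cube); split; last exact: row_cons_measure_cube.
by rewrite /= -mu_lebn.
Qed.

Lemma lebn_sigma_finite (R : realType) n :
  exists mu : {sigma_finite_measure set 'rV[R]_n -> \bar R},
    (mu : set _ -> \bar R) = @lebn R n /\
    forall A : set 'rV[R]_n, measurable A -> bounded_set A -> (mu A < +oo)%E.
Proof.
have [mu [mu_lebn mu_cube]] := lebn_sigma_finite_cube R n.
exists mu; split => // A mA /bounded_set_sub_cube[M AM].
apply: le_lt_trans (mu_cube M); apply: le_measure; rewrite ?inE //.
exact: measurable_cube.
Qed.

Section open_measurable.
Context {R : realType} {n : nat}.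

Definition open_box (c : 'rV[R]_n) (r : R) : set 'rV[R]_n :=
  [set x | forall i, `](c ord0 i - r), (c ord0 i + r)[%classic (x ord0 i)].

Lemma measurable_open_box c r : measurable (open_box c r).
Proof.
by apply: (measurable_coord_box (fun i => `](c ord0 i - r), (c ord0 i + r)[%classic))
  => i; exact: measurable_itv.
Qed.

Definition rat_box (q : 'rV[rat]_n * rat) : set 'rV[R]_n :=
  open_box (map_mx ratr q.1) (ratr q.2).

Lemma open_rat_box {O : set 'rV[R]_n} {x} :
  open O -> O x -> exists q, rat_box q `<=` O /\ rat_box q x.
Proof.
move=> oO Ox; have /nbhs_ballP [e e0 xeO] := oO x Ox.
have /rat_in_itvoo [r] : 0 < e / 2 by rewrite divr_gt0.
rewrite in_itv /= => /andP [r0 re].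
have near_rat i : exists q : rat, ratr q \in `](x ord0 i - ratr r), (x ord0 i + ratr r)[.
  by apply: rat_in_itvoo; rewrite ltrBlDr -addrA ltrDl addr_gt0.
pose c : 'rV[rat]_n := \row_i xchoose (near_rat i).
have xc i : `|x ord0 i - ratr (c ord0 i)| < ratr r.
  by rewrite ltr_distlC mxE; have := xchooseP (near_rat i); rewrite in_itv.
exists (c, r); split => [y cy|i]; last by rewrite /= in_itv /= mxE -ltr_distl.
apply: xeO; split => // i j; rewrite (ord1 i) {i}.
have := cy j; rewrite /= in_itv /= mxE -ltr_distl distrC => cyj.
apply: le_lt_trans (ler_distD (ratr (c ord0 j)) _ _) _.
by have := xc j; lra.
Qed.

Lemma open_measurable_row (O : set 'rV[R]_n) : open O -> measurable O.
Proof.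
move=> oO.
have -> : O = \bigcup_(q in [set q | rat_box q `<=` O]) rat_box q.
  apply/seteqP; split => [x Ox|x [q qO]]; last exact: qO.
  by have [q [qO qx]] := open_rat_box oO Ox; exists q.
rewrite bigcup_mkcond; apply: countable_bigcupT_measurable; first exact: countableP.
by move=> q; case: ifP => _; [exact: measurable_open_box|exact: measurable0].
Qed.

End open_measurable.

Section powR_inequalities.
Context {R : realType}.
Implicit Types a b c g s p P lam : R.

Lemma powR_le1D {a s p} : 0 <= a -> 0 <= s -> s <= p -> a `^ s <= 1 + a `^ p.
Proof.
move=> a0 s0 sp; have := powR_ge0 a p.
have [a1|a1] := leP a 1; last by have := ler_powR (ltW a1) sp; lra.
have : a `^ s <= 1 `^ s by apply: ge0_ler_powR; rewrite ?nnegrE ?ler01.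
by rewrite powR1; lra.
Qed.

Lemma powR_le_max1 {lam p P} : 0 < lam -> 0 <= p -> p <= P ->
  lam `^ p <= Num.max 1 lam `^ P.
Proof.
move=> lam0 p0 pP; have m1 : 1 <= Num.max 1 lam by rewrite le_max lexx.
apply: le_trans (ler_powR m1 pP).
apply: ge0_ler_powR => //; rewrite ?nnegrE ?(ltW lam0) ?(le_trans ler01 m1) //.
by rewrite le_max lexx orbT.
Qed.

Lemma powR_le_modular a s p P lam : 0 <= a -> 0 <= s -> s <= p -> p <= P -> 0 < lam ->
  a `^ s <= Num.max 1 lam `^ P * (1 + (a / lam) `^ p).
Proof.
move=> a0 s0 sp pP lam0; have p0 := le_trans s0 sp.
have K1 : 1 <= Num.max 1 lam `^ P.
  have := ler_powR (_ : 1 <= Num.max 1 lam) (le_trans p0 pP).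
  by rewrite powRr0 le_max lexx; apply.
have scale : a `^ p = lam `^ p * (a / lam) `^ p.
  by rewrite -powRM ?divr_ge0 ?(ltW lam0) // mulrC divfK ?gt_eqF.
have := powR_le1D a0 s0 sp; have := powR_le_max1 lam0 p0 pP.
have := powR_ge0 (a / lam) p; rewrite scale; nra.
Qed.

Lemma mul_powR_le_powRD a c g b : 0 <= a -> 0 <= c -> 0 <= g -> 0 <= b ->
  a `^ g * c `^ b <= a `^ (g + b) + c `^ (g + b).
Proof.
move=> a0 c0 g0 b0.
have [gb0|gb_neq0] := eqVneq (g + b) 0.
  have [-> ->] : g = 0 /\ b = 0 by split; lra.
  by rewrite addr0 !powRr0; lra.
have gbD x : x `^ (g + b) = x `^ g * x `^ b by rewrite powRD // (negPf gb_neq0).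
have := powR_ge0 a (g + b); have := powR_ge0 c (g + b).
have := powR_ge0 a g; have := powR_ge0 c b.
have [ac|ca] := leP a c.
  have : a `^ g <= c `^ g by apply: ge0_ler_powR; rewrite ?nnegrE.
  rewrite !gbD; nra.
have : c `^ b <= a `^ b by apply: ge0_ler_powR; rewrite ?nnegrE // ltW.
rewrite !gbD; nra.
Qed.

End powR_inequalities.

Lemma normr_le_sqrt_sum_sqr {R : realType} {I : finType} (g : I -> R) i :
  `|g i| <= Num.sqrt (\sum_j g j ^+ 2).
Proof.
rewrite -sqrtr_sqr; apply: ler_wsqrtr.
by rewrite (bigD1 i) //= lerDl sumr_ge0 // => j _; exact: sqr_ge0.
Qed.

Lemma measurable_fun_powR {d} {T : measurableType d} {R : realType} {D : set T}
    {f g : T -> R} :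
  measurable_fun D f -> measurable_fun D g -> measurable_fun D (fun x => f x `^ g x).
Proof.
move=> mf mg mD; move: (mD); rewrite /powR.
apply: measurable_fun_if => //; first exact: measurable_fun_eqr.
- apply: (measurable_funS mD); first by move=> x [].
  rewrite (_ : (fun x => _) = fun x => if g x == 0 then 1 else 0).
    by apply: measurable_fun_if => //; exact: measurable_fun_eqr.
  by apply/funext => x; case: (g x == 0).
- apply: (measurable_funS mD); first by move=> x [].
  apply: measurableT_comp; first exact: measurable_expR.
  by apply: measurable_funM => //; apply: measurableT_comp => //; exact: measurable_ln.
Qed.

Section finite_measure_integrals.
Local Open Scope ereal_scope.
Context {d} {T : measurableType d} {R : realType} {mu : {measure set T -> \bar R}}.
Context {D : set T} (mD : measurable D).

Lemma ge0_integral_lty_ae_le (f h : T -> R) :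
  measurable_fun D f -> measurable_fun D h ->
  (forall x, D x -> 0 <= f x)%R -> (forall x, D x -> 0 <= h x)%R ->
  {ae mu, forall x, D x -> f x <= h x}%R ->
  \int[mu]_(x in D) (h x)%:E < +oo -> \int[mu]_(x in D) (f x)%:E < +oo.
Proof.
move=> mf mh f0 h0 fh; apply: le_lt_trans.
by apply: ae_ge0_le_integral => //; exact/measurable_EFinP.
Qed.

Lemma ge0_integralD_lty {f h : T -> R} :
  measurable_fun D f -> measurable_fun D h ->
  (forall x, D x -> 0 <= f x)%R -> (forall x, D x -> 0 <= h x)%R ->
  \int[mu]_(x in D) (f x)%:E < +oo -> \int[mu]_(x in D) (h x)%:E < +oo ->
  \int[mu]_(x in D) (f x + h x)%:E < +oo.
Proof.
move=> mf mh f0 h0 If Ih; under eq_integral do rewrite EFinD.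
rewrite ge0_integralD //; first exact: lte_add_pinfty.
all: exact/measurable_EFinP.
Qed.

Lemma integral_affine_lty {h : T -> R} {K : R} :
  mu D < +oo -> measurable_fun D h -> (forall x, D x -> 0 <= h x)%R -> (0 <= K)%R ->
  \int[mu]_(x in D) (h x)%:E < +oo -> \int[mu]_(x in D) (K * (1 + h x))%:E < +oo.
Proof.
move=> muD mh h0 K0 Ih; under eq_integral do rewrite EFinM.
rewrite ge0_integralZl_EFin //; last 2 first.
- by move=> x Dx; rewrite lee_fin addr_ge0 ?h0.
- by apply/measurable_EFinP; apply: measurable_funD => //; exact: measurable_cst.
apply: lte_mul_pinfty => //; apply: ge0_integralD_lty => //.
by rewrite (integral_cst mu mD 1) mul1e.
Qed.

End finite_measure_integrals.

Section modular_integrals.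
Local Open Scope ereal_scope.
Context {d} {T : measurableType d} {R : realType} {mu : {measure set T -> \bar R}}.
Context {D : set T} (mD : measurable D).

Let measurable_fun_normr {f : T -> R} :
  measurable_fun D f -> measurable_fun D (fun x => `|f x|)%R.
Proof. by move=> mf; apply: measurableT_comp. Qed.

Let measurable_fun_modular {f p : T -> R} (lam : R) :
  measurable_fun D f -> measurable_fun D p ->
  measurable_fun D (fun x => (`|f x| / lam) `^ p x)%R.
Proof.
move=> mf mp; apply: measurable_fun_powR => //.
by apply: measurable_funM; [exact: measurable_fun_normr|exact: measurable_cst].
Qed.

Lemma modular_integral_powR_lty {f p s : T -> R} {lam P : R} :
  mu D < +oo ->
  measurable_fun D f -> measurable_fun D p -> measurable_fun D s -> (0 < lam)%R ->
  \int[mu]_(x in D) ((`|f x| / lam) `^ p x)%:E < +oo ->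
  {ae mu, forall x, D x -> [/\ 0 <= s x, s x <= p x & p x <= P]%R} ->
  \int[mu]_(x in D) (`|f x| `^ s x)%:E < +oo.
Proof.
move=> muD mf mp ms lam0 If sp.
have mF := measurable_fun_modular lam mf mp.
apply: (ge0_integral_lty_ae_le mD _
  (fun x => Num.max 1 lam `^ P * (1 + (`|f x| / lam) `^ p x))%R).
- exact: measurable_fun_powR (measurable_fun_normr mf) ms.
- apply: measurable_funM; first exact: measurable_cst.
  by apply: measurable_funD => //; exact: measurable_cst.
- by move=> x _; exact: powR_ge0.
- by move=> x _; rewrite mulr_ge0 ?addr_ge0 ?powR_ge0.
- by apply: filterS sp => x sp_x /sp_x[s0 sp' pP]; exact: powR_le_modular.
- by apply: integral_affine_lty => // [x _|]; exact: powR_ge0.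
Qed.

Lemma modular_integral_le_lty {f F p : T -> R} {lam : R} :
  measurable_fun D f -> measurable_fun D F -> measurable_fun D p -> (0 < lam)%R ->
  {ae mu, forall x, D x -> 0 <= p x}%R ->
  (forall x, D x -> `|f x| <= `|F x|)%R ->
  \int[mu]_(x in D) ((`|F x| / lam) `^ p x)%:E < +oo ->
  \int[mu]_(x in D) ((`|f x| / lam) `^ p x)%:E < +oo.
Proof.
move=> mf mF mp lam0 p0 fF.
apply: ge0_integral_lty_ae_le => //; try exact: measurable_fun_modular.
- by move=> x _; exact: powR_ge0.
- by move=> x _; exact: powR_ge0.
apply: filterS p0 => x p0x Dx.
apply: ge0_ler_powR; rewrite ?nnegrE ?divr_ge0 ?(ltW lam0) ?p0x //.
by apply: ler_wpM2r; [rewrite invr_ge0 ltW|exact: fF].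
Qed.

Lemma integral_mul_powR_lty {f g a b : T -> R} :
  measurable_fun D f -> measurable_fun D g -> measurable_fun D a -> measurable_fun D b ->
  {ae mu, forall x, D x -> 0 <= a x /\ 0 <= b x}%R ->
  \int[mu]_(x in D) (`|f x| `^ (a x + b x))%:E < +oo ->
  \int[mu]_(x in D) (`|g x| `^ (a x + b x))%:E < +oo ->
  \int[mu]_(x in D) (`|f x| `^ a x * `|g x| `^ b x)%:E < +oo.
Proof.
move=> mf mg ma mb ab0 If Ig.
have mab : measurable_fun D (fun x => a x + b x)%R by exact: measurable_funD.
have mfab := measurable_fun_powR (measurable_fun_normr mf) mab.
have mgab := measurable_fun_powR (measurable_fun_normr mg) mab.
apply: (ge0_integral_lty_ae_le mD _
  (fun x => `|f x| `^ (a x + b x) + `|g x| `^ (a x + b x))%R).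
- apply: measurable_funM; apply: measurable_fun_powR => //; exact: measurable_fun_normr.
- exact: measurable_funD.
- by move=> x _; rewrite mulr_ge0 ?powR_ge0.
- by move=> x _; rewrite addr_ge0 ?powR_ge0.
- apply: filterS ab0 => x ab0x /ab0x[a0 b0].
  exact: mul_powR_le_powRD.
- by apply: ge0_integralD_lty => // x _; exact: powR_ge0.
Qed.

End modular_integrals.

Section modular_embedding.
Local Open Scope ereal_scope.
Context {d} {T : measurableType d} {R : realType} {mu : {measure set T -> \bar R}}.
Context {D : set T} (mD : measurable D) (muD : mu D < +oo).
Context {gam bet the p : T -> R} {P : R}.
Hypotheses (mgam : measurable_fun D gam) (mbet : measurable_fun D bet).
Hypotheses (mthe : measurable_fun D the) (mp : measurable_fun D p).
Hypothesis exponents : {ae mu, forall x, D x ->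
  [/\ 1 <= gam x, 1 <= bet x, gam x + bet x <= the x, the x <= p x & p x <= P]%R}.
Context {u : T -> R} {lam : R}.
Hypotheses (mfu : measurable_fun D u) (lam0 : (0 < lam)%R).
Hypothesis modular_u : \int[mu]_(x in D) ((`|u x| / lam) `^ p x)%:E < +oo.

Lemma modular_integrable : mu.-integrable D (EFin \o u).
Proof.
apply/integrableP; split; first exact/measurable_EFinP.
rewrite (eq_integral (fun x => (`|u x| `^ cst 1%R x)%:E)); last first.
  by move=> x _; rewrite /= powRr1.
apply: (modular_integral_powR_lty (P := P) mD muD mfu mp _ lam0 modular_u).
  exact: measurable_cst.
by apply: filterS exponents => x /[apply] -[? ? ? ? ?]; split => //=; lra.
Qed.

Lemma modular_integral_powR_the_lty : \int[mu]_(x in D) (`|u x| `^ the x)%:E < +oo.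
Proof.
apply: (modular_integral_powR_lty (P := P) mD muD mfu mp mthe lam0 modular_u).
by apply: filterS exponents => x /[apply] -[? ? ? ? ?]; split => //; lra.
Qed.

Lemma modular_integral_mul_powR_lty {g : T -> R} {lam' : R} :
  measurable_fun D g -> (0 < lam')%R ->
  \int[mu]_(x in D) ((`|g x| / lam') `^ p x)%:E < +oo ->
  \int[mu]_(x in D) (`|u x| `^ gam x * `|g x| `^ bet x)%:E < +oo.
Proof.
move=> mg lam'0 modular_g.
have mgb : measurable_fun D (fun x => gam x + bet x)%R by exact: measurable_funD.
have gbp : {ae mu, forall x, D x ->
    [/\ 0 <= gam x + bet x, gam x + bet x <= p x & p x <= P]%R}.
  by apply: filterS exponents => x /[apply] -[? ? ? ? ?]; split => //; lra.
apply: (integral_mul_powR_lty mD mfu mg mgam mbet).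
- by apply: filterS exponents => x /[apply] -[? ? ? ? ?]; split; lra.
- exact: (modular_integral_powR_lty mD muD mfu mp mgb lam0 modular_u gbp).
- exact: (modular_integral_powR_lty mD muD mg mp mgb lam'0 modular_g gbp).
Qed.

End modular_embedding.

Theorem theorem3p5 (R : realType) (n : nat) (hn : (2 <= n)%N)
  (Om : set 'rV[R]_n) (hOm : bounded_domain Om) (hLip : lipschitz_boundary Om)
  (gam bet the p : 'rV[R]_n -> R)
  (hgam : M0 Om gam) (hbet : M0 Om bet) (hthe : M0 Om the) (hp : M0 Om p)
  (eps0 : R) (heps0 : 0 < eps0)
  (hgbt : {ae @lebn R n, forall x, Om x -> gam x + bet x + eps0 <= the x})
  (hpt : {ae @lebn R n, forall x, Om x -> the x <= p x}) :
  W1px Om p `<=` S1 Om gam bet the.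
Proof.
have [mu [mu_lebn mu_bounded]] := lebn_sigma_finite R n.
have [_ oOm _ bOm] := hOm; have mOm : measurable Om by exact: open_measurable_row.
have muOm := mu_bounded Om mOm bOm.
move: hgam hbet hthe hp hgbt hpt => [mgam [? gam1]] [mbet [? bet1]] [mthe _].
move=> [mp [P pP]] gbt thep; rewrite -mu_lebn in gam1 bet1 pP gbt thep.
have exponents : {ae mu, forall x, Om x ->
    [/\ 1 <= gam x, 1 <= bet x, gam x + bet x <= the x, the x <= p x & p x <= P]}.
  have gbp : {ae mu, forall x, Om x -> [/\ 1 <= gam x, 1 <= bet x & p x <= P]}.
    apply: (filterS3 _ _ gam1 bet1 pP) => x g1 b1 pPx Ox.
    by move: (g1 Ox) (b1 Ox) (pPx Ox) => /andP[? _] /andP[? _] /andP[_ ?].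
  apply: (filterS3 _ _ gbp gbt thep) => x gbpx gt tp Ox.
  by move: (gbpx Ox) (gt Ox) (tp Ox) => -[? ? ?] ? ?; split => //; lra.
rewrite /W1px /S1 /Lpx -mu_lebn.
move=> u [[mfu [lam [lam0 Iu]]] [g [g_grad [mG [lamG [lamG0 IG]]]]]].
split; first exact: (modular_integrable mOm muOm mp exponents mfu lam0 Iu).
exists g; split => //; split.
  exact: (modular_integral_powR_the_lty mOm muOm mthe mp exponents mfu lam0 Iu).
move=> i; apply: (modular_integral_mul_powR_lty mOm muOm mgam mbet mp exponents mfu
  lam0 Iu (g_grad.1 i) lamG0).
apply: (modular_integral_le_lty mOm (g_grad.1 i) mG mp lamG0 _ _ IG).
  by apply: filterS exponents => x /[apply] -[? ? ? ? ?]; lra.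
move=> x _; rewrite [X in _ <= X]ger0_norm ?sqrtr_ge0 //.
exact: (normr_le_sqrt_sum_sqr (g^~ x)).
Qed.
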